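(* Let $M$ be a complete pointed metric space and let $\varphi_1,\dots,\varphi_n$ be non-negative Lipschitz functions on $M$ with bounded support such that $\varphi_1+\cdots+\varphi_n=1$ on $M$. Suppose $A_1,\dots,A_n$ are subsets of $M$ each containing the base point, with $\mathrm{supp}(\varphi_k)\subset A_k$ for all $k$. Then $\mathcal{F}(M)$ is isomorphic to a complemented subspace of $\mathcal{F}(A_1)\oplus\cdots\oplus\mathcal{F}(A_n)$.
   Context: For a pointed metric space $(M,d)$ with base point $0$, ${\mathrm{Lip}}_0(M)$ is the Banach space of Lipschitz $f:M\to\mathbb{R}$ with $f(0)=0$, normed by the Lipschitz constant. The Lipschitz-free space $\mathcal{F}(M)$ is the closed linear span in ${\mathrm{Lip}}_0(M)^*$ of the evaluation functionals $\delta(x)$, $x\in M$. For a subset $A\subseteq M$ containing the base point, $\mathcal{F}(A)$ (with the restricted metric) is identified isometrically with the closed linear span of $\delta(A)$ in $\mathcal{F}(M)$. The direct sum is any finite direct sum of Banach spaces (all such norms are equivalent). *)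

From mathcomp Require Import all_boot all_order all_algebra.
From mathcomp Require Import reals.
Set Implicit Arguments. Unset Strict Implicit. Unset Printing Implicit Defensive.
Import Order.TTheory GRing.Theory Num.Theory.
Local Open Scope ring_scope.

Section LipschitzFree.
Variables (R : realType) (T : Type) (d : T -> T -> R) (x0 : T).

Definition is_metric : Prop :=
  [/\ forall x y, 0 <= d x y,
      forall x y, d x y = 0 <-> x = y,
      forall x y, d x y = d y x
    & forall x y z, d x z <= d x y + d y z].

Definition cauchy_seq (u : nat -> T) : Prop :=
  forall e, 0 < e -> exists N, forall m p, (N <= m)%N -> (N <= p)%N -> d (u m) (u p) < e.

Definition converges_to (u : nat -> T) (x : T) : Prop :=
  forall e, 0 < e -> exists N, forall m, (N <= m)%N -> d (u m) x < e.

Definition mcomplete : Prop :=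
  forall u, cauchy_seq u -> exists x, converges_to u x.

Definition lipschitz_with (L : R) (f : T -> R) : Prop :=
  forall x y, `|f x - f y| <= L * d x y.

Definition lipschitzf (f : T -> R) : Prop := exists L, lipschitz_with L f.

Definition mclosure (S : T -> Prop) (x : T) : Prop :=
  forall e, 0 < e -> exists y, S y /\ d x y < e.

Definition fsupport (f : T -> R) : T -> Prop := mclosure (fun x => f x <> 0).

Definition bounded_set (S : T -> Prop) : Prop :=
  exists r, forall x, S x -> d x0 x <= r.

Definition lip0 (f : T -> R) : Prop := lipschitzf f /\ f x0 = 0.

(** elements of the algebraic dual of Lip_0(M) are represented by
    arbitrary maps (T -> R) -> R; only their values on Lip_0(M) matter. *)
Definition functional := (T -> R) -> R.

Definition feq (mu nu : functional) : Prop := forall f, lip0 f -> mu f = nu f.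

Definition normbound (mu : functional) (c : R) : Prop :=
  forall f L, 0 <= L -> lipschitz_with L f -> f x0 = 0 -> `|mu f| <= c * L.

Definition lincomb (a : R) (mu nu : functional) : functional :=
  fun f => a * mu f + nu f.

Definition fcomb (m : nat) (a : 'I_m -> R) (x : 'I_m -> T) : functional :=
  fun f => \sum_(i < m) a i * f (x i).

(** F(A) = closed linear span of delta(A) in Lip_0(M)^* *)
Definition free_space (A : T -> Prop) (mu : functional) : Prop :=
  forall e, 0 < e -> exists (m : nat) (a : 'I_m -> R) (x : 'I_m -> T),
    (forall i, A (x i)) /\
    normbound (fun f => mu f - fcomb a x f) e.

Definition FM : functional -> Prop := free_space (fun _ => True).

(** the direct sum F(A_1) (+) ... (+) F(A_n), with the l1 norm *)
Definition dsum_mem (n : nat) (A : 'I_n -> T -> Prop) (nu : 'I_n -> functional) : Prop :=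
  forall k, free_space (A k) (nu k).

Definition dsum_feq (n : nat) (nu nu' : 'I_n -> functional) : Prop :=
  forall k, feq (nu k) (nu' k).

Definition dsum_normbound (n : nat) (nu : 'I_n -> functional) (c : R) : Prop :=
  exists cs : 'I_n -> R, (forall k, normbound (nu k) (cs k)) /\ \sum_(k < n) cs k <= c.

Definition dsum_lincomb (n : nat) (a : R) (nu nu' : 'I_n -> functional) : 'I_n -> functional :=
  fun k => lincomb a (nu k) (nu' k).

(** F(M) is isomorphic to a complemented subspace of (+)_k F(A_k):
    there are bounded linear J : F(M) -> (+)_k F(A_k) and
    P : (+)_k F(A_k) -> F(M) with P o J = id_{F(M)}. *)
Definition iso_complemented_in_dsum (n : nat) (A : 'I_n -> T -> Prop) : Prop :=
  exists (J : functional -> 'I_n -> functional) (P : ('I_n -> functional) -> functional),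
  [/\
      [/\ forall mu, FM mu -> dsum_mem A (J mu),
          forall a mu nu, FM mu -> FM nu ->
            dsum_feq (J (lincomb a mu nu)) (dsum_lincomb a (J mu) (J nu))
        & exists C, 0 <= C /\ forall mu c, FM mu -> normbound mu c ->
            dsum_normbound (J mu) (C * c)],
      [/\ forall nu, dsum_mem A nu -> FM (P nu),
          forall a nu nu', dsum_mem A nu -> dsum_mem A nu' ->
            feq (P (dsum_lincomb a nu nu')) (lincomb a (P nu) (P nu'))
        & exists C, 0 <= C /\ forall nu c, dsum_mem A nu -> dsum_normbound nu c ->
            normbound (P nu) (C * c)]
    &
      forall mu, FM mu -> feq (P (J mu)) mu].

End LipschitzFree.

From mathcomp Require Import all_boot all_order all_algebra.
From mathcomp Require Import reals.
From mathcomp Require Import ring lra.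
From Stdlib Require Import FunctionalExtensionality ClassicalEpsilon.
Set Implicit Arguments. Unset Strict Implicit. Unset Printing Implicit Defensive.
Import Order.TTheory GRing.Theory Num.Theory.
Local Open Scope ring_scope.

(** Pointwise multiplication by phi_k
    is a bounded operator on Lip_0(M) (a "multiplier"), so its adjoint
      J_k mu = (f |-> mu (phi_k * f))
    maps F(M) into F(A_k): an approximation  sum a_i delta(x_i)  of mu is
    sent to  sum a_i phi_k(x_i) delta(x_i), whose points with phi_k(x_i) <> 0
    lie in supp phi_k.  Conversely  P nu = sum_k nu_k  maps the direct sum
    into F(M), with norm at most 1 for the l1 norm.  Finally P (J mu) = mu
    because elements of F(M) are additive on finite sums in Lip_0(M) and
    sum_k phi_k * f = f. *)

Lemma eq0_le_small (R : realType) (x K : R) : 0 <= K ->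
  (forall e, 0 < e -> `|x| <= e * K) -> x = 0.
Proof.
move=> K0 small; apply/eqP; apply/negP => /negP x_neq0.
have x_gt0 : 0 < `|x| by rewrite normr_gt0.
have := small (`|x| / (K + 1)) (divr_gt0 x_gt0 (ltr_wpDl K0 ltr01)).
rewrite mulrAC ler_pdivlMr; last lra.
nra.
Qed.

Section FreeSpaces.
Variables (R : realType) (T : Type) (d : T -> T -> R) (x0 : T).
Hypothesis metric_d : is_metric d.

Lemma d_ge0 x y : 0 <= d x y. Proof. by case: metric_d. Qed.
Lemma d_xx x : d x x = 0. Proof. by case: metric_d => _ h _ _; apply/h. Qed.
Lemma d_sym x y : d x y = d y x. Proof. by case: metric_d. Qed.

Lemma lipschitz_nonneg f : lipschitzf d f -> exists L, 0 <= L /\ lipschitz_with d L f.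
Proof.
case=> L hL; exists (Num.max L 0); split; first by rewrite le_max lexx orbT.
move=> x y; apply: (le_trans (hL x y)); apply: ler_wpM2r; first exact: d_ge0.
by rewrite le_max lexx.
Qed.

Lemma fcomb_sum m (a : 'I_m -> R) (x : 'I_m -> T) p (g : 'I_p -> T -> R) :
  fcomb a x (fun y => \sum_(k < p) g k y) = \sum_(k < p) fcomb a x (g k).
Proof.
rewrite /fcomb; under eq_bigr => i _ do rewrite mulr_sumr.
by rewrite exchange_big.
Qed.

(** Elements of [free_space A] are additive on finite sums in Lip_0(M):
    the defect is bounded by [e] times a fixed constant for every [e > 0],
    by comparing with an [e]-approximating combination of Diracs. *)
Lemma free_space_additive A mu m (g : 'I_m -> T -> R) : free_space d x0 A mu ->
  (forall k, lip0 d x0 (g k)) ->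
  mu (fun y => \sum_(k < m) g k y) = \sum_(k < m) mu (g k).
Proof.
move=> mu_free g_lip.
have [L hL] : exists L : 'I_m -> R,
    forall k, 0 <= L k /\ lipschitz_with d (L k) (g k).
  apply: (choice (fun k L => 0 <= L /\ lipschitz_with d L (g k))) => k.
  by apply: lipschitz_nonneg; case: (g_lip k).
set G := fun y => \sum_(k < m) g k y.
have SL_ge0 : 0 <= \sum_(k < m) L k by apply: sumr_ge0 => k _; case: (hL k).
have G_lip : lipschitz_with d (\sum_(k < m) L k) G.
  move=> x y; rewrite /G -sumrB mulr_suml.
  apply: (le_trans (ler_norm_sum _ _ _)); apply: ler_sum => k _.
  by case: (hL k) => _; apply.
have G0 : G x0 = 0 by rewrite /G big1 // => k _; case: (g_lip k).
apply/eqP; rewrite -subr_eq0; apply/eqP.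
apply: (@eq0_le_small R _ (\sum_(k < m) L k + \sum_(k < m) L k)); first lra.
move=> e e_gt0; have [p [a [x [_ approx]]]] := mu_free e e_gt0.
have -> : mu G - \sum_(k < m) mu (g k) =
  (mu G - fcomb a x G) - \sum_(k < m) (mu (g k) - fcomb a x (g k)).
  by rewrite sumrB /G fcomb_sum; ring.
apply: (le_trans (ler_normB _ _)); rewrite mulrDr; apply: lerD; first exact: approx.
apply: (le_trans (ler_norm_sum _ _ _)); rewrite mulr_sumr; apply: ler_sum => k _.
by case: (hL k) (g_lip k) => L_ge0 hl [_ gk0]; apply: approx.
Qed.

Lemma free_space_mono (A B : T -> Prop) mu : (forall x, A x -> B x) ->
  free_space d x0 A mu -> free_space d x0 B mu.
Proof.
move=> AB mu_free e e_gt0; have [m [a [x [xA approx]]]] := mu_free e e_gt0.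
by exists m, a, x; split => // i; apply: AB.
Qed.

Lemma free_space0 A : A x0 -> free_space d x0 A (fun _ => 0).
Proof.
move=> A0 e e_gt0; exists 0%N, (fun _ => 0), (fun _ => x0); split => // f L L0 _ _.
by rewrite /fcomb big_ord0 subr0 normr0; apply: mulr_ge0 => //; apply: ltW.
Qed.

(** [free_space A] is closed under addition: concatenate two
    [e/2]-approximations. *)
Lemma free_spaceD A mu nu : free_space d x0 A mu -> free_space d x0 A nu ->
  free_space d x0 A (fun f => mu f + nu f).
Proof.
move=> mu_free nu_free e e_gt0.
have e2_gt0 : 0 < e / 2 by apply: divr_gt0.
have [m1 [a1 [x1 [x1A h1]]]] := mu_free _ e2_gt0.
have [m2 [a2 [x2 [x2A h2]]]] := nu_free _ e2_gt0.
pose a i := match split i with inl j => a1 j | inr j => a2 j end.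
pose x i := match split i with inl j => x1 j | inr j => x2 j end.
exists (m1 + m2)%N, a, x; split => [i|f L L0 hf f0].
  by rewrite /x; case: (split i).
have -> : fcomb a x f = fcomb a1 x1 f + fcomb a2 x2 f.
  rewrite /fcomb big_split_ord /=; congr (_ + _); apply: eq_bigr => i _.
    by rewrite /a /x (unsplitK (inl _ i)).
  by rewrite /a /x (unsplitK (inr _ i)).
have := h1 f L L0 hf f0; have := h2 f L L0 hf f0.
set u := mu f - _; set v := nu f - _ => hv hu.
have -> : mu f + nu f - (fcomb a1 x1 f + fcomb a2 x2 f) = u + v by rewrite /u /v; ring.
apply: (le_trans (ler_normD _ _)).
have -> : e * L = e / 2 * L + e / 2 * L by field.
exact: lerD.
Qed.

Lemma free_space_sum A m (g : 'I_m -> functional R T) : A x0 ->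
  (forall k, free_space d x0 A (g k)) ->
  free_space d x0 A (fun f => \sum_(k < m) g k f).
Proof.
move=> A0; elim: m g => [|m IH] g g_free.
  have -> : (fun f => \sum_(k < 0) g k f) = (fun _ => 0).
    by apply: functional_extensionality => f; rewrite big_ord0.
  exact: free_space0.
have -> : (fun f => \sum_(k < m.+1) g k f) =
    (fun f => \sum_(k < m) g (widen_ord (leqnSn m) k) f + g ord_max f).
  by apply: functional_extensionality => f; rewrite big_ord_recr.
by apply: free_spaceD => //; apply: IH.
Qed.

Definition multiplier (phi : T -> R) (C : R) : Prop :=
  0 <= C /\ forall f L, 0 <= L -> lipschitz_with d L f -> f x0 = 0 ->
    lipschitz_with d (C * L) (fun y => phi y * f y).

Lemma nonzero_in_support (phi : T -> R) x : phi x <> 0 -> fsupport d phi x.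
Proof. by move=> phix e e_gt0; exists x; rewrite d_xx. Qed.

(** A Lipschitz function with bounded support is a multiplier: with
    [|phi| <= Lp r + |phi x0|] and [|f x| <= L r] on the ball of radius [r]
    containing the support, the product rule gives the constant
    [2 Lp r + |phi x0|] (swap [x] and [y] when [phi x = 0]). *)
Lemma lipschitz_bounded_multiplier (phi : T -> R) :
  lipschitzf d phi -> bounded_set d x0 (fsupport d phi) ->
  exists C, multiplier phi C.
Proof.
move=> /lipschitz_nonneg [Lp [Lp_ge0 phi_lip]] [r0 supp_r0].
pose r := Num.max r0 0.
have r_ge0 : 0 <= r by rewrite le_max lexx orbT.
have near_x0 : forall x, phi x <> 0 -> d x0 x <= r.
  move=> x /nonzero_in_support /supp_r0 /le_trans; apply; by rewrite le_max lexx.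
have phi_bound : forall y, `|phi y| <= Lp * r + `|phi x0|.
  move=> y; case: (eqVneq (phi y) 0) => [->|/eqP phiy].
    by rewrite normr0; apply: addr_ge0 => //; apply: mulr_ge0.
  have -> : phi y = (phi y - phi x0) + phi x0 by ring.
  apply: (le_trans (ler_normD _ _)); apply: lerD => //.
  apply: (le_trans (phi_lip y x0)); rewrite d_sym.
  by apply: ler_wpM2l => //; apply: near_x0.
pose C := 2 * (Lp * r) + `|phi x0|.
have C_ge0 : 0 <= C by apply: addr_ge0 => //; do 2?apply: mulr_ge0.
exists C; split => // f L L0 f_lip f0.
have one_side : forall x y, phi x <> 0 ->
    `|phi x * f x - phi y * f y| <= C * L * d x y.
  move=> x y phix.
  have -> : phi x * f x - phi y * f y = phi y * (f x - f y) + f x * (phi x - phi y)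
    by ring.
  apply: (le_trans (ler_normD _ _)); rewrite !normrM.
  have fx_bound : `|f x| <= L * r.
    rewrite -[f x]subr0 -f0; apply: (le_trans (f_lip x x0)); rewrite d_sym.
    by apply: ler_wpM2l => //; apply: near_x0.
  have p1 : `|phi y| * `|f x - f y| <= (Lp * r + `|phi x0|) * (L * d x y)
    by apply: ler_pM.
  have p2 : `|f x| * `|phi x - phi y| <= (L * r) * (Lp * d x y)
    by apply: ler_pM.
  have -> : C * L * d x y =
    (Lp * r + `|phi x0|) * (L * d x y) + (L * r) * (Lp * d x y) by rewrite /C; ring.
  exact: lerD.
move=> x y /=.
case: (eqVneq (phi x) 0) => [phix|/eqP phix]; last exact: one_side.
case: (eqVneq (phi y) 0) => [phiy|/eqP phiy]; last by rewrite distrC d_sym one_side.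
rewrite phix phiy !mul0r subrr normr0; apply: mulr_ge0; last exact: d_ge0.
exact: mulr_ge0.
Qed.

(** The adjoint of multiplication by [phi], acting on functionals. *)
Definition weight (phi : T -> R) (mu : functional R T) : functional R T :=
  fun f => mu (fun y => phi y * f y).

Lemma weight_normbound phi C mu c : multiplier phi C ->
  normbound d x0 mu c -> normbound d x0 (weight phi mu) (c * C).
Proof.
move=> [C_ge0 phi_mult] mu_c f L L0 f_lip f0; rewrite -mulrA.
by apply: mu_c; [apply: mulr_ge0 | apply: phi_mult | rewrite f0 mulr0].
Qed.

(** Weighting by a multiplier [phi] maps [free_space B] into [free_space A]
    whenever [x0] and the support of [phi] lie in [A]: the Diracs at points
    where [phi] vanishes are moved to [x0], where every [f] vanishes. *)
Lemma weight_free_space (A B : T -> Prop) phi C mu : multiplier phi C ->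
  A x0 -> (forall x, fsupport d phi x -> A x) ->
  free_space d x0 B mu -> free_space d x0 A (weight phi mu).
Proof.
move=> phi_mult A0 suppA mu_free e e_gt0.
have [C_ge0 _] := phi_mult.
have C1_gt0 : 0 < C + 1 by lra.
have [m [a [x [_ approx]]]] := mu_free _ (divr_gt0 e_gt0 C1_gt0).
exists m, (fun i => a i * phi (x i)), (fun i => if phi (x i) == 0 then x0 else x i).
split=> [i|f L L0 f_lip f0].
  by case: eqP => [//|/nonzero_in_support]; apply: suppA.
have -> : fcomb (fun i => a i * phi (x i))
    (fun i => if phi (x i) == 0 then x0 else x i) f = fcomb a x (fun y => phi y * f y).
  rewrite /fcomb; apply: eq_bigr => i _.
  by case: eqP => [->|_]; rewrite ?f0 !(mulr0, mul0r, mulrA).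
apply: (le_trans (weight_normbound phi_mult approx L0 f_lip f0)).
apply: ler_wpM2r => //.
rewrite mulrAC ler_pdivrMr //; nra.
Qed.

Definition sum_functionals n (nu : 'I_n -> functional R T) : functional R T :=
  fun f => \sum_(k < n) nu k f.

Lemma sum_functionals_free n (A : 'I_n -> T -> Prop) nu :
  dsum_mem d x0 A nu -> FM d x0 (sum_functionals nu).
Proof.
move=> nu_free; apply: free_space_sum => // k.
by apply: free_space_mono (nu_free k).
Qed.

Lemma sum_functionals_normbound n (nu : 'I_n -> functional R T) c :
  dsum_normbound d x0 nu c -> normbound d x0 (sum_functionals nu) c.
Proof.
move=> [cs [nu_cs cs_c]] f L L0 f_lip f0.
apply: (le_trans (ler_norm_sum _ _ _)).
apply: (le_trans (y := \sum_(k < n) cs k * L)).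
  by apply: ler_sum => k _; apply: nu_cs.
by rewrite -mulr_suml; apply: ler_wpM2r.
Qed.

(** Summing the weights of a partition of unity by multipliers recovers the
    functional, by additivity of elements of F(M). *)
Lemma sum_weights_id n (phi : 'I_n -> T -> R) (C : 'I_n -> R) mu :
  (forall k, multiplier (phi k) (C k)) -> (forall x, \sum_(k < n) phi k x = 1) ->
  FM d x0 mu -> feq d x0 (sum_functionals (fun k => weight (phi k) mu)) mu.
Proof.
move=> phi_mult phi_sum mu_free f [/lipschitz_nonneg [L [L0 f_lip]] f0].
rewrite /sum_functionals /weight -(free_space_additive mu_free).
  congr mu; apply: functional_extensionality => y.
  by rewrite -mulr_suml phi_sum mul1r.
move=> k; split; first by exists (C k * L); apply: (phi_mult k).2.
by rewrite f0 mulr0.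
Qed.

End FreeSpaces.

Theorem lemma2p4 (R : realType) (T : Type) (d : T -> T -> R) (x0 : T)
  (n : nat) (phi : 'I_n -> T -> R) (A : 'I_n -> T -> Prop) :
  is_metric d -> mcomplete d ->
  (forall k x, 0 <= phi k x) ->
  (forall k, lipschitzf d (phi k)) ->
  (forall k, bounded_set d x0 (fsupport d (phi k))) ->
  (forall x, \sum_(k < n) phi k x = 1) ->
  (forall k, A k x0) ->
  (forall k x, fsupport d (phi k) x -> A k x) ->
  iso_complemented_in_dsum d x0 A.
Proof.
move=> metric_d _ _ phi_lip phi_bdd phi_sum A0 suppA.
have [C phi_mult] : exists C : 'I_n -> R, forall k, multiplier d x0 (phi k) (C k).
  by apply: (choice (fun k => multiplier d x0 (phi k))) => k;
    apply: lipschitz_bounded_multiplier.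
exists (fun mu k => weight (phi k) mu), (@sum_functionals R T n).
split; [split|split|].
- move=> mu mu_free k.
  exact: (weight_free_space metric_d (phi_mult k) (A0 k) (suppA k) mu_free).
- by [].
- exists (\sum_(k < n) C k); split; first by apply: sumr_ge0 => k _; case: (phi_mult k).
  move=> mu c _ mu_c; exists (fun k => c * C k); split.
    by move=> k; apply: weight_normbound.
  by rewrite -mulr_sumr mulrC.
- exact: sum_functionals_free.
- move=> a nu nu' _ _ f _.
  by rewrite /sum_functionals /dsum_lincomb /lincomb big_split mulr_sumr.
- exists 1; split=> [|nu c _ nu_c]; first exact: ler01.
  by rewrite mul1r; apply: sum_functionals_normbound.
- by move=> mu; apply: (sum_weights_id metric_d phi_mult phi_sum).
Qed.
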